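(* There is an absolute constant $C>0$ such that for all integers $n \ge m > l \ge 0$ and all $M > 0$, $$R_{K_n\times K_n}(2^{-m}, 2^{-l}, M) \le C\,\frac{1+M}{m-l}.$$
   Context: $K_n := \{\sum_{k=1}^\infty a_k 4^{-k} : a_k \in \{0,3\} \text{ for } 1 \le k \le n,\ a_k \in \{0,1,2,3\} \text{ for } k > n\}$. For $E \subset \mathbb{R}^2$ and $\varepsilon, r, M > 0$ the rectifiability constant is $$R_E(\varepsilon,r,M) = \sup \frac{m(\{x \in J : x\omega_1 + (F(x)+y)\omega_2 \in E \text{ for some } -\varepsilon \le y \le \varepsilon\})}{m(J)},$$ where $m$ is Lebesgue measure on $\mathbb{R}$ and the supremum is over all orthonormal $\omega_1,\omega_2 \in S^1$, all $F:\mathbb{R}\to\mathbb{R}$ with Lipschitz constant at most $M$, and all intervals $J \subset \mathbb{R}$ of length at least $r$. *)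

From HB Require Import structures.
From mathcomp Require Import all_boot all_order all_algebra.
From mathcomp Require Import all_classical all_reals all_analysis.
Set Implicit Arguments. Unset Strict Implicit. Unset Printing Implicit Defensive.
Import Order.TTheory GRing.Theory Num.Theory.
Import numFieldNormedType.Exports.
Local Open Scope classical_set_scope.
Local Open Scope ring_scope.

Definition Kset (R : realType) (n : nat) : set R :=
  [set x | exists a : nat -> nat,
      (forall k, (1 <= k <= n)%N -> a k = 0%N \/ a k = 3%N) /\
      (forall k, (a k <= 3)%N) /\
      x = limn (fun N => \sum_(1 <= k < N) ((a k)%:R / 4%:R ^+ k : R))].

Definition orthonormal2 (R : realType) (w1 w2 : R * R) : Prop :=
  w1.1 ^+ 2 + w1.2 ^+ 2 = 1 /\ w2.1 ^+ 2 + w2.2 ^+ 2 = 1 /\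
  w1.1 * w2.1 + w1.2 * w2.2 = 0.

Definition lipschitz_le (R : realType) (F : R -> R) (M : R) : Prop :=
  forall x y, `|F x - F y| <= M * `|x - y|.

Definition graph_pt (R : realType) (w1 w2 : R * R) (F : R -> R) (x y : R) : R * R :=
  (x * w1.1 + (F x + y) * w2.1, x * w1.2 + (F x + y) * w2.2).

Definition hit_set (R : realType) (E : set (R * R)) (eps : R)
    (w1 w2 : R * R) (F : R -> R) (a b : R) : set R :=
  [set x | x \in `[a, b] /\ exists y, -eps <= y <= eps /\ E (graph_pt w1 w2 F x y)].

Definition rect_const (R : realType) (E : set (R * R)) (eps r M : R) : \bar R :=
  ereal_sup [set v | exists w1 w2 F a b,
     orthonormal2 w1 w2 /\ lipschitz_le F M /\ r <= b - a /\
     v = (lebesgue_measure (hit_set E eps w1 w2 F a b) * ((b - a)^-1)%:E)%E].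

From mathcomp Require Import all_boot all_order all_algebra.
From mathcomp Require Import all_classical all_reals all_analysis.
From mathcomp Require Import ring lra zify measurable_realfun.
Import Order.TTheory GRing.Theory Num.Theory.
Import numFieldNormedType.Exports.
Local Open Scope classical_set_scope.
Local Open Scope ring_scope.

(* Write the thickened graph as t |-> gamma t + y w2, where gamma t = t w1 + F t w2
   and t runs over J = [a, b]. Each coordinate of gamma is (1 + M)-Lipschitz and,
   since w1 is a unit vector orthogonal to w2, |s - t| <= |gamma s - gamma t|.
   Points of K_n x K_n lie in the 4^N squares of side 4^-N of the four-corner
   Cantor construction (N <= n), and a thickening by 2^-m <= 4^-(N+1) stays within
   a quarter side of them; so it suffices to bound the time gamma spends near these
   squares. For a square of side s < |J|, gamma cannot stay near it during all of
   J, so every visit to its s/4-neighbourhood, which lasts at most 6 s, comes with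
   a crossing out to its s/2-neighbourhood, which lasts at least s / (4 (1 + M))
   and avoids the neighbourhoods of its four corner children. Each such level thus
   divides the time by 1 + 1 / (24 (1 + M)), and since |J| >= 2^-l there are about
   (m - l) / 2 of them above side 2^-m. *)

Section Lipschitz.
Context {R : realType}.
Implicit Types (h : R -> R) (L : R).

Lemma lipschitz_le_ge0 {h L} : lipschitz_le h L -> 0 <= L.
Proof.
move=> hL; have := hL 1 0; rewrite subr0 normr1 mulr1.
exact: le_trans (normr_ge0 _).
Qed.

Lemma lipschitz_le_continuous {h L} : lipschitz_le h L -> continuous h.
Proof.
move=> hL x; apply/cvgrPdist_le => e e0.
have L1 : 0 < L + 1 by rewrite ltr_wpDl// (lipschitz_le_ge0 hL).
exists (e / (L + 1)); first by rewrite /= divr_gt0.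
move=> y /= xy; rewrite (le_trans (hL x y))// (@le_trans _ _ ((L + 1) * `|x - y|))//.
  by rewrite ler_wpM2r// lerDl.
by rewrite mulrC -ler_pdivlMr// ltW.
Qed.

Lemma lipschitz_le_opp {h L} : lipschitz_le h L -> lipschitz_le (fun s => - h s) L.
Proof. by move=> hL x y; rewrite -opprD normrN. Qed.

Lemma lipschitz_le_reflect {h L} : lipschitz_le h L -> lipschitz_le (fun s => h (- s)) L.
Proof. by move=> hL x y; rewrite (le_trans (hL _ _))// -opprD normrN. Qed.

Lemma last_sublevel {h s1 s2 r} : continuous h -> s1 <= s2 -> h s1 <= r ->
  exists u, [/\ s1 <= u <= s2, h u <= r & forall s, u < s <= s2 -> r < h s].
Proof.
move=> hc s12 hs1; pose A := `[s1, s2] `&` h @^-1` [set x | x <= r].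
have A_sup : has_sup A.
  split; first by exists s1; split; rewrite //= in_itv/= lexx.
  by exists s2 => s [/=]; rewrite in_itv/= => /andP[].
have [] : A (sup A).
  have A_closed : closed A.
    apply: closedI; first exact: itv_closed.
    by move: hc => /continuous_closedP; apply; exact: closed_le.
  by rewrite {1}(closure_id A).1//; apply: closure_sup; case: A_sup.
rewrite /= in_itv/= => /andP[s1u us2] hu; exists (sup A); split; rewrite ?s1u//.
move=> s /andP[us ss2]; rewrite ltNge; apply/negP => hs.
have As : A s by split; rewrite //= in_itv/= ss2 andbT (le_trans s1u (ltW us)).
by have := sup_upper_bound A_sup As; rewrite leNgt us.
Qed.

Lemma lipschitz_crossing_le {h L s1 s2 r1 r2} : lipschitz_le h L -> s1 <= s2 ->
  h s1 <= r1 -> r1 < r2 -> r2 <= h s2 ->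
  exists u v, [/\ s1 <= u, v <= s2, r2 - r1 <= L * (v - u)
    & forall s, u < s < v -> r1 < h s < r2].
Proof.
move=> hL s12 hs1 r12 hs2; have hc := lipschitz_le_continuous hL.
have [u [/andP[s1u us2] hu hgt]] := last_sublevel hc s12 hs1.
(* the first entry into [r2, +oo[ after u is the last exit of the reflected function *)
pose g s := - h (- s).
have gc : continuous g.
  exact/lipschitz_le_continuous/lipschitz_le_opp/lipschitz_le_reflect.
have [||w [/andP[s2w wu] hw hlt]] :=
  last_sublevel gc (_ : - s2 <= - u) (_ : g (- s2) <= - r2).
- by rewrite lerN2.
- by rewrite /g opprK lerN2.
rewrite /g lerN2 in hw.
exists u, (- w); split => //; first by rewrite lerNl.
  have uw : u <= - w by rewrite lerNr.
  have := le_trans (ler_norm _) (hL (- w) u); rewrite ger0_norm ?subr_ge0//.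
  by apply: le_trans; exact: lerB.
move=> s /andP[us sw]; apply/andP; split.
  by apply: hgt; rewrite us (le_trans (ltW sw))// lerNl.
have := hlt (- s); rewrite /g opprK ltrN2; apply.
by rewrite ltrNr sw lerN2 ltW.
Qed.

Lemma lipschitz_crossing {h L s1 s2 r1 r2} : lipschitz_le h L ->
  h s1 <= r1 -> r1 < r2 -> r2 <= h s2 ->
  exists u v, [/\ Num.min s1 s2 <= u, v <= Num.max s1 s2, r2 - r1 <= L * (v - u)
    & forall s, u < s < v -> r1 < h s < r2].
Proof.
move=> hL hs1 r12 hs2; have [s12|s21] := leP s1 s2.
  exact: lipschitz_crossing_le.
have [|||u [v [s2u vs1 uvL huv]]] := lipschitz_crossing_le (lipschitz_le_reflect hL)
  (_ : - s1 <= - s2) (_ : h (- - s1) <= r1) r12 (_ : r2 <= h (- - s2)).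
- by rewrite lerN2 ltW.
- by rewrite opprK.
- by rewrite opprK.
exists (- v), (- u); split.
- by rewrite lerNr.
- by rewrite lerNl.
- by rewrite opprK [- u + _]addrC.
- by move=> s /andP[vs su]; have := huv (- s); rewrite opprK; apply; rewrite ltrNr su ltrNl.
Qed.

End Lipschitz.

Section Squares.
Context {R : realType}.
Implicit Types (p s r : R) (z : R * R).

(* [itv_excess p s t] is the signed distance from t to [p, p + s], so for r >= 0
   [sq_nbhd x0 y0 s r] is the closed sup-norm r-neighbourhood of [x0, x0 + s] x [y0, y0 + s]. *)
Definition itv_excess p s (t : R) := Num.max (p - t) (t - (p + s)).

Definition sq_excess x0 y0 s z := Num.max (itv_excess x0 s z.1) (itv_excess y0 s z.2).

Definition sq_nbhd x0 y0 s r : set (R * R) := [set z | sq_excess x0 y0 s z <= r].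

Lemma sq_nbhdP x0 y0 s r z : sq_nbhd x0 y0 s r z <->
  [/\ x0 - r <= z.1, z.1 <= x0 + s + r, y0 - r <= z.2 & z.2 <= y0 + s + r].
Proof.
rewrite /sq_nbhd /sq_excess /itv_excess /= !ge_max; split.
  by move=> /andP[/andP[? ?] /andP[? ?]]; split; lra.
by case=> *; apply/andP; split; apply/andP; split; lra.
Qed.

Lemma sq_nbhd_le x0 y0 s r r' : r <= r' -> sq_nbhd x0 y0 s r `<=` sq_nbhd x0 y0 s r'.
Proof. by move=> rr' z /= /le_trans; apply. Qed.

Lemma sq_nbhd_disj p1 q1 p2 q2 s r :
  [\/ p1 + s + r < p2 - r, p2 + s + r < p1 - r, q1 + s + r < q2 - r | q2 + s + r < q1 - r] ->
  sq_nbhd p1 q1 s r `&` sq_nbhd p2 q2 s r = set0.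
Proof.
move=> gap; apply/seteqP; split => z // [/sq_nbhdP[? ? ? ?] /sq_nbhdP[? ? ? ?]].
by case: gap; lra.
Qed.

Lemma max_le_add (x y x' y' e : R) : x <= x' + e -> y <= y' + e ->
  Num.max x y <= Num.max x' y' + e.
Proof.
move=> hx hy; rewrite ge_max (le_trans hx) ?(le_trans hy)// lerD2r.
  by rewrite le_max lexx orbT.
by rewrite le_max lexx.
Qed.

Lemma sq_excess_le_add x0 y0 s z z' e : `|z.1 - z'.1| <= e -> `|z.2 - z'.2| <= e ->
  sq_excess x0 y0 s z <= sq_excess x0 y0 s z' + e.
Proof.
move=> /ler_normlP[? ?] /ler_normlP[? ?].
by apply: max_le_add; apply: max_le_add; lra.
Qed.

End Squares.

Lemma unit_vector_coord_le1 {R : realType} (x y : R) : x ^+ 2 + y ^+ 2 = 1 -> `|x| <= 1.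
Proof.
move=> xy1; have : `|x| ^+ 2 <= 1 by rewrite real_normK ?num_real//; have := sqr_ge0 y; lra.
by have := normr_ge0 x; set t := `|x|; nra.
Qed.

Lemma orthonormal2_coord_le1 {R : realType} {w1 w2 : R * R} : orthonormal2 w1 w2 ->
  [/\ `|w1.1| <= 1, `|w1.2| <= 1, `|w2.1| <= 1 & `|w2.2| <= 1].
Proof.
case=> h1 [h2 _]; split; first exact: unit_vector_coord_le1 h1.
- exact: unit_vector_coord_le1 (etrans (addrC _ _) h1).
- exact: unit_vector_coord_le1 h2.
- exact: unit_vector_coord_le1 (etrans (addrC _ _) h2).
Qed.

Definition curve {R : realType} (w1 w2 : R * R) (F : R -> R) (t : R) : R * R :=
  graph_pt w1 w2 F t 0.

Section Curve.
Context {R : realType} {w1 w2 : R * R} {F : R -> R} {M : R}.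
Hypotheses (hw : orthonormal2 w1 w2) (hF : lipschitz_le F M).
Local Notation curve := (curve w1 w2 F).

Lemma graph_ptE x y : graph_pt w1 w2 F x y = ((curve x).1 + y * w2.1, (curve x).2 + y * w2.2).
Proof. by rewrite /curve /graph_pt /=; congr pair; ring. Qed.

Let M_ge0 : 0 <= M := lipschitz_le_ge0 hF.

Lemma lipschitz_le_combination (u v : R) : `|u| <= 1 -> `|v| <= 1 ->
  lipschitz_le (fun t => t * u + F t * v) (1 + M).
Proof.
move=> u1 v1 s t.
have -> : s * u + F s * v - (t * u + F t * v) = (s - t) * u + (F s - F t) * v by ring.
rewrite (le_trans (ler_normD _ _))// !normrM mulrDl mul1r lerD ?ler_piMr//.
by rewrite (le_trans (ler_wpM2r (normr_ge0 _) (hF s t))) ?ler_piMr ?mulr_ge0.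
Qed.

Lemma curve_lipschitz1 : lipschitz_le (fun t => (curve t).1) (1 + M).
Proof.
have [w11 _ w21 _] := orthonormal2_coord_le1 hw.
by move=> s t; rewrite /curve /graph_pt /= !addr0; exact: lipschitz_le_combination.
Qed.

Lemma curve_lipschitz2 : lipschitz_le (fun t => (curve t).2) (1 + M).
Proof.
have [_ w12 _ w22] := orthonormal2_coord_le1 hw.
by move=> s t; rewrite /curve /graph_pt /= !addr0; exact: lipschitz_le_combination.
Qed.

Lemma curve_sep s t :
  (s - t) ^+ 2 <= ((curve s).1 - (curve t).1) ^+ 2 + ((curve s).2 - (curve t).2) ^+ 2.
Proof.
case: hw => h1 [h2 h3]; rewrite /curve /graph_pt /=.
have -> : (s * w1.1 + (F s + 0) * w2.1 - (t * w1.1 + (F t + 0) * w2.1)) ^+ 2 +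
  (s * w1.2 + (F s + 0) * w2.2 - (t * w1.2 + (F t + 0) * w2.2)) ^+ 2 =
  (s - t) ^+ 2 * (w1.1 ^+ 2 + w1.2 ^+ 2) + (F s - F t) ^+ 2 * (w2.1 ^+ 2 + w2.2 ^+ 2)
  + 2 * (s - t) * (F s - F t) * (w1.1 * w2.1 + w1.2 * w2.2) by ring.
by rewrite h1 h2 h3 !mulr1 mulr0 addr0 lerDl sqr_ge0.
Qed.

Lemma curve_close s t e : `|(curve s).1 - (curve t).1| <= e ->
  `|(curve s).2 - (curve t).2| <= e -> `|s - t| <= 2 * e.
Proof.
move=> e1 e2; have := curve_sep s t.
rewrite -(real_normK (num_real (s - t))) -(real_normK (num_real ((curve s).1 - _))).
rewrite -(real_normK (num_real ((curve s).2 - _))).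
have := normr_ge0 (s - t); have := normr_ge0 ((curve s).1 - (curve t).1).
have := normr_ge0 ((curve s).2 - (curve t).2).
move: e1 e2; set A := `|s - t|; set X := `|_ - _|; set Y := `|_ - _|.
by move=> *; nra.
Qed.

Lemma curve_sq_nbhd_close {x0 y0 s r t t'} :
  sq_nbhd x0 y0 s r (curve t) -> sq_nbhd x0 y0 s r (curve t') -> `|t - t'| <= 2 * (s + 2 * r).
Proof.
move=> /sq_nbhdP[? ? ? ?] /sq_nbhdP[? ? ? ?].
by apply: curve_close; apply/ler_normlP; split; lra.
Qed.

Lemma sq_excess_curve_lipschitz x0 y0 s :
  lipschitz_le (fun t => sq_excess x0 y0 s (curve t)) (1 + M).
Proof.
have le_add t t' :
    sq_excess x0 y0 s (curve t) <= sq_excess x0 y0 s (curve t') + (1 + M) * `|t - t'|.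
  by apply: sq_excess_le_add; [exact: curve_lipschitz1|exact: curve_lipschitz2].
move=> t t'; apply/ler_normlP; split; last by rewrite lerBlDr addrC le_add.
by rewrite opprB lerBlDr addrC distrC le_add.
Qed.

End Curve.

Lemma le_lebesgue_measure {R : realType} {A B : set R} :
  A `<=` B -> (lebesgue_measure A <= lebesgue_measure B)%E.
Proof. by move=> AB; exact: le_outer_measure. Qed.

Definition times_in {R : realType} (w1 w2 : R * R) (F : R -> R) (a b : R)
  (S : set (R * R)) : set R := [set t | a <= t <= b /\ S (curve w1 w2 F t)].

Definition time_in {R : realType} (w1 w2 : R * R) (F : R -> R) (a b : R)
  (S : set (R * R)) : R := fine (lebesgue_measure (times_in w1 w2 F a b S)).

Section TimeIn.
Context {R : realType} {w1 w2 : R * R} {F : R -> R} {a b : R}.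
Local Notation curve := (curve w1 w2 F).
Local Notation times_in := (times_in w1 w2 F a b).
Local Notation time_in := (time_in w1 w2 F a b).
Implicit Types (S T : set (R * R)).

Lemma times_in_sub_itv S : times_in S `<=` `[a, b].
Proof. by move=> t [abt _]; rewrite /= in_itv. Qed.

Lemma lebesgue_times_in S : lebesgue_measure (times_in S) = (time_in S)%:E.
Proof.
rewrite /time_in fineK// ge0_fin_numE ?measure_ge0//.
rewrite (le_lt_trans (le_lebesgue_measure (times_in_sub_itv S)))//.
by rewrite lebesgue_measure_itv/=; case: ifP; rewrite ?ltry.
Qed.

Lemma time_in_ge0 S : 0 <= time_in S.
Proof. by rewrite -lee_fin -lebesgue_times_in measure_ge0. Qed.

Lemma time_in_eq0 S : ~ (exists t, times_in S t) -> time_in S = 0.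
Proof.
move=> /forallNP S0; rewrite /time_in (_ : times_in S = set0) ?measure0//.
by apply/seteqP; split=> t // /S0.
Qed.

Lemma time_in_le_length S : a <= b -> time_in S <= b - a.
Proof.
move=> ab; rewrite -lee_fin -lebesgue_times_in.
rewrite (le_trans (le_lebesgue_measure (times_in_sub_itv S)))//.
by rewrite lebesgue_measure_itv/=; case: ifP; rewrite ?lee_fin ?subr_ge0.
Qed.

Lemma le_time_in S T : S `<=` T -> time_in S <= time_in T.
Proof.
move=> ST; rewrite -lee_fin -!lebesgue_times_in; apply: le_lebesgue_measure.
by move=> t [abt /ST].
Qed.

Lemma times_inU S T : times_in (S `|` T) = times_in S `|` times_in T.
Proof.
apply/seteqP; split=> t; first by move=> [abt [St|Tt]]; [left|right].
by move=> [[abt St]|[abt Tt]]; split=> //; [left|right].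
Qed.

Lemma times_inD S T : times_in (S `\` T) = times_in S `\` times_in T.
Proof.
apply/seteqP; split=> t; first by move=> [abt [St nTt]]; split=> // -[].
by move=> [[abt St] nTt]; split=> //; split=> // Tt; apply: nTt.
Qed.

Lemma time_inU S T : measurable (times_in S) -> measurable (times_in T) ->
  time_in (S `|` T) <= time_in S + time_in T.
Proof. by move=> mS mT; rewrite -lee_fin EFinD -!lebesgue_times_in times_inU measureU2. Qed.

Lemma time_inU_disj S T : measurable (times_in S) -> measurable (times_in T) ->
  S `&` T = set0 -> time_in (S `|` T) = time_in S + time_in T.
Proof.
move=> mS mT ST0; apply/EFin_inj; rewrite EFinD -!lebesgue_times_in times_inU measureU//.
by apply/seteqP; split=> t // [[_ St] [_ Tt]]; have : (S `&` T) (curve t) by []; rewrite ST0.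
Qed.

Lemma time_in_ge_itv S u v : a <= u -> v <= b ->
  (forall s, u < s < v -> S (curve s)) -> v - u <= time_in S.
Proof.
move=> au vb uvS; rewrite -lee_fin -lebesgue_times_in.
have sub : `]u, v[ `<=` times_in S.
  move=> s; rewrite /= in_itv/= => /andP[us sv]; split; last by apply: uvS; rewrite us.
  by rewrite (le_trans au (ltW us)) (le_trans (ltW sv)).
apply: le_trans (le_lebesgue_measure sub).
rewrite lebesgue_measure_itv/=; case: ifP => [//|]; rewrite lte_fin => /negbT.
by rewrite -leNgt lee_fin subr_le0.
Qed.

Context {M : R}.
Hypotheses (hw : orthonormal2 w1 w2) (hF : lipschitz_le F M).

Lemma measurable_times_in_sq_nbhd x0 y0 s r : measurable (times_in (sq_nbhd x0 y0 s r)).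
Proof.
have hc := lipschitz_le_continuous (sq_excess_curve_lipschitz hw hF x0 y0 s).
have -> : times_in (sq_nbhd x0 y0 s r) =
    `[a, b] `&` ((fun t => sq_excess x0 y0 s (curve t)) @^-1` `]-oo, r]).
  by apply/seteqP; split=> t /=; rewrite !in_itv/= => -[].
apply: measurableI; first exact: measurable_itv.
by rewrite -[X in measurable X]setTI; apply: continuous_measurable_fun => //; exact: measurable_itv.
Qed.

Lemma time_in_sq_nbhd_le S x0 y0 s r : 0 <= s + 2 * r ->
  S `<=` sq_nbhd x0 y0 s r -> time_in S <= 4 * (s + 2 * r).
Proof.
move=> sr0 Ssq; have [[t1 [_ St1]]|/time_in_eq0->] := pselect (exists t, times_in S t); last first.
  by rewrite mulr_ge0.
have sub : times_in S `<=` `[t1 - 2 * (s + 2 * r), t1 + 2 * (s + 2 * r)].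
  move=> t [_ St]; rewrite /= in_itv/=.
  have /ler_normlP[] := curve_sq_nbhd_close hw (Ssq _ St) (Ssq _ St1).
  by move=> *; apply/andP; split; lra.
rewrite -lee_fin -lebesgue_times_in (le_trans (le_lebesgue_measure sub))//.
rewrite lebesgue_measure_itv/=; case: ifP => _; last by rewrite lee_fin mulr_ge0.
by rewrite lee_fin; lra.
Qed.

End TimeIn.

Section Quad.
Context {R : realType}.

Definition quad {T : Type} (op : T -> T -> T) (f : R -> R -> R -> T) (x0 y0 s : R) : T :=
  op (op (op (f x0 y0 (s / 4)) (f (x0 + 3 * s / 4) y0 (s / 4)))
       (f x0 (y0 + 3 * s / 4) (s / 4)))
    (f (x0 + 3 * s / 4) (y0 + 3 * s / 4) (s / 4)).

Lemma ler_quad (f g : R -> R -> R -> R) x0 y0 s :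
  (forall x y, f x y (s / 4) <= g x y (s / 4)) -> quad +%R f x0 y0 s <= quad +%R g x0 y0 s.
Proof. by move=> fg; rewrite /quad !lerD. Qed.

Lemma quad_mulr (f : R -> R -> R -> R) c x0 y0 s :
  quad +%R f x0 y0 s * c = quad +%R (fun x y t => f x y t * c) x0 y0 s.
Proof. by rewrite /quad !mulrDl. Qed.

(* The union of the quarter-side neighbourhoods of the 4^N squares of generation N of
   the four-corner construction in [x0, x0 + s] x [y0, y0 + s]. *)
Fixpoint cover (N : nat) : R -> R -> R -> set (R * R) :=
  if N is N'.+1 then quad setU (cover N') else fun x0 y0 s => sq_nbhd x0 y0 s (s / 4).

End Quad.

Definition growth {R : realType} (M : R) : R := 1 + (24 * (1 + M))^-1.

Section Decay.
Context {R : realType} {w1 w2 : R * R} {F : R -> R} {M a b : R}.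
Hypotheses (hw : orthonormal2 w1 w2) (hF : lipschitz_le F M).
Local Notation curve := (curve w1 w2 F).
Local Notation times_in := (times_in w1 w2 F a b).
Local Notation time_in := (time_in w1 w2 F a b).

Let M_ge0 : 0 <= M := lipschitz_le_ge0 hF.

Let measurable_times_in_sq x y t r : measurable (times_in (sq_nbhd x y t r)) :=
  measurable_times_in_sq_nbhd hw hF x y t r.

Lemma measurable_times_in_cover N x0 y0 s : measurable (times_in (cover N x0 y0 s)).
Proof.
elim: N x0 y0 s => [|N IH] x0 y0 s /=; first exact: measurable_times_in_sq.
by rewrite /quad !times_inU; do 3 apply: measurableU => //.
Qed.

Lemma time_in_coverS N x0 y0 s :
  time_in (cover N.+1 x0 y0 s) <= quad +%R (fun x y t => time_in (cover N x y t)) x0 y0 s.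
Proof.
have m := measurable_times_in_cover N; rewrite /= /quad.
apply: le_trans (time_inU _ _ _ (m _ _ _)) _.
  by rewrite !times_inU; do 2 apply: measurableU => //.
rewrite lerD2r; apply: le_trans (time_inU _ _ _ (m _ _ _)) _.
  by rewrite !times_inU; apply: measurableU.
by rewrite lerD2r; apply: time_inU.
Qed.

Lemma time_in_quad_sq_nbhd x0 y0 s : 0 < s ->
  quad +%R (fun x y t => time_in (sq_nbhd x y t (t / 2))) x0 y0 s <= time_in (cover 0 x0 y0 s).
Proof.
move=> s0; have m := measurable_times_in_sq; rewrite /quad.
set A := sq_nbhd x0 y0 _ _; set B := sq_nbhd (x0 + _) y0 _ _.
set C := sq_nbhd x0 (y0 + _) _ _; set E := sq_nbhd (x0 + _) (y0 + _) _ _.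
have dAB : A `&` B = set0 by apply: sq_nbhd_disj; apply: Or41; lra.
have dAC : A `&` C = set0 by apply: sq_nbhd_disj; apply: Or43; lra.
have dAE : A `&` E = set0 by apply: sq_nbhd_disj; apply: Or41; lra.
have dBC : B `&` C = set0 by apply: sq_nbhd_disj; apply: Or42; lra.
have dBE : B `&` E = set0 by apply: sq_nbhd_disj; apply: Or43; lra.
have dCE : C `&` E = set0 by apply: sq_nbhd_disj; apply: Or41; lra.
rewrite -(time_inU_disj _ _ (m _ _ _ _) (m _ _ _ _) dAB).
rewrite -(time_inU_disj _ _ _ (m _ _ _ _)); first last.
- by rewrite setIUl dAC dBC setU0.
- by rewrite times_inU; apply: measurableU.
rewrite -(time_inU_disj _ _ _ (m _ _ _ _)); first last.
- by rewrite !setIUl dAE dBE dCE !setU0.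
- by rewrite !times_inU; apply: measurableU; [apply: measurableU|].
apply: le_time_in => z [[[]|]|] /sq_nbhdP[? ? ? ?]; apply/sq_nbhdP; split; lra.
Qed.

Lemma time_in_annulus_ge x0 y0 s r1 r2 t1 : r1 < r2 -> 2 * (s + 2 * r2) < b - a ->
  times_in (sq_nbhd x0 y0 s r1) t1 ->
  r2 - r1 <= (1 + M) * time_in (sq_nbhd x0 y0 s r2 `\` sq_nbhd x0 y0 s r1).
Proof.
move=> r12 sab [/andP[at1 t1b] ht1].
pose h t := sq_excess x0 y0 s (curve t).
(* [a, b] is too long for the curve to stay in the r2-neighbourhood *)
have [t2 [/andP[at2 t2b] ht2]] : exists t2, a <= t2 <= b /\ r2 <= h t2.
  have [ha|ha] := leP r2 (h a); first by exists a; rewrite lexx (le_trans at1).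
  have [hb|hb] := leP r2 (h b); first by exists b; rewrite lexx (le_trans _ t1b).
  have := curve_sq_nbhd_close hw (ltW ha : sq_nbhd _ _ _ _ _) (ltW hb : sq_nbhd _ _ _ _ _).
  by rewrite distrC => /ler_normlP[_]; lra.
have [u [v [t12u vt12 uvL huv]]] :=
  lipschitz_crossing (sq_excess_curve_lipschitz hw hF x0 y0 s) ht1 r12 ht2.
apply: (le_trans uvL); rewrite ler_wpM2l ?addr_ge0//; apply: time_in_ge_itv.
- by rewrite (le_trans _ t12u)// le_min at1.
- by rewrite (le_trans vt12)// ge_max t1b.
- by move=> t /huv /andP[h1 h2]; split; [exact: ltW|rewrite /sq_nbhd /= leNgt h1].
Qed.

Lemma time_in_sq_nbhd_grow x0 y0 s : 0 < s -> 4 * s < b - a ->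
  time_in (sq_nbhd x0 y0 s (s / 4)) * growth M <= time_in (sq_nbhd x0 y0 s (s / 2)).
Proof.
move=> s0 sab; set In := sq_nbhd _ _ _ (s / 4); set Out := sq_nbhd _ _ _ (s / 2).
have InOut : In `<=` Out by apply: sq_nbhd_le; lra.
have mIn : measurable (times_in In) by exact: measurable_times_in_sq.
have mOutIn : measurable (times_in (Out `\` In)).
  by rewrite times_inD; apply: measurableD; exact: measurable_times_in_sq.
rewrite -(setDUK InOut) time_inU_disj ?setDIK// /growth mulrDr mulr1 lerD2l.
have [[t1 Int1]|/time_in_eq0->] := pselect (exists t, times_in In t); last first.
  by rewrite mul0r time_in_ge0.
have In_le : time_in In <= 4 * (s + 2 * (s / 4)).
  by apply: (time_in_sq_nbhd_le hw In x0 y0) => //; lra.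
have Ann_ge : s / 2 - s / 4 <= (1 + M) * time_in (Out `\` In).
  by apply: (time_in_annulus_ge _ _ _ _ _ t1) => //; lra.
rewrite ler_pdivrMr ?mulr_gt0 ?ltr0Sn ?ltr_wpDr//.
move: In_le Ann_ge; set x := time_in In; set y := time_in (Out `\` In).
by move=> *; nra.
Qed.

Lemma time_in_cover_coarse x0 y0 s : 0 < s ->
  quad +%R (fun x y t => time_in (cover 0 x y t)) x0 y0 s <= time_in (cover 0 x0 y0 s).
Proof.
move=> s0; apply: le_trans (time_in_quad_sq_nbhd _ _ _ s0).
by apply: ler_quad => x y; apply/le_time_in/sq_nbhd_le; lra.
Qed.

Lemma time_in_cover_fine x0 y0 s : 0 < s -> s < b - a ->
  quad +%R (fun x y t => time_in (cover 0 x y t)) x0 y0 s * growth M <= time_in (cover 0 x0 y0 s).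
Proof.
move=> s0 sab; apply: le_trans (time_in_quad_sq_nbhd _ _ _ s0).
by rewrite quad_mulr; apply: ler_quad => x y; apply: time_in_sq_nbhd_grow; lra.
Qed.

Let growth_ge0 : 0 <= growth M.
Proof. by rewrite addr_ge0// invr_ge0 mulr_ge0// addr_ge0. Qed.

Lemma time_in_cover_fine_decay j x0 y0 s : 0 < s -> s < b - a ->
  time_in (cover j x0 y0 s) * growth M ^+ j <= time_in (cover 0 x0 y0 s).
Proof.
elim: j x0 y0 s => [|j IH] x0 y0 s s0 sab; first by rewrite mulr1.
apply: le_trans (time_in_cover_fine _ _ _ s0 sab).
rewrite exprSr mulrA ler_wpM2r//.
rewrite (le_trans (ler_wpM2r (exprn_ge0 _ growth_ge0) (time_in_coverS _ _ _ _)))//.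
by rewrite quad_mulr; apply: ler_quad => x y; apply: IH; lra.
Qed.

Lemma time_in_cover_decay N0 j x0 y0 s : 0 < s -> s / 4 ^+ N0 < b - a ->
  time_in (cover (N0 + j) x0 y0 s) * growth M ^+ j <= time_in (cover 0 x0 y0 s).
Proof.
elim: N0 x0 y0 s => [|N0 IH] x0 y0 s s0 sab.
  by apply: time_in_cover_fine_decay; rewrite // -(divr1 s) -(expr0 4).
apply: le_trans (time_in_cover_coarse _ _ _ s0).
rewrite (le_trans (ler_wpM2r (exprn_ge0 _ growth_ge0) (time_in_coverS _ _ _ _)))//.
rewrite quad_mulr; apply: ler_quad => x y; apply: IH; first lra.
by move: sab; rewrite exprS invfM mulrA.
Qed.

End Decay.

Section Digits.
Context {R : realType}.

(* The left endpoints \sum_(k <= N) e_k 4^-k, e_k \in {0, 3}, of generation N. *)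
Fixpoint cantor_corner (N : nat) (p : R) : Prop :=
  if N is N'.+1 then exists e p', [/\ e = 0 \/ e = 3, cantor_corner N' p' & p = e / 4 + p' / 4]
  else p = 0.

Lemma cover_cantor_corner N (x0 y0 s p q : R) :
  cantor_corner N p -> cantor_corner N q ->
  sq_nbhd (x0 + s * p) (y0 + s * q) (s / 4 ^+ N) (s / 4 ^+ N / 4) `<=` cover N x0 y0 s.
Proof.
elim: N x0 y0 s p q => [|N IH] x0 y0 s p q /=.
  by move=> -> -> z; rewrite !mulr0 !addr0 expr0 divr1.
move=> [e [p' [e03 p'N ->]]] [f [q' [f03 q'N ->]]] z.
have shift x c r : x + s * (c / 4 + r / 4) = (x + 3 * s / 4 * (c / 3)) + s / 4 * r.
  by field.
rewrite exprS invfM mulrA !shift.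
case: e03 f03 => -> [] ->; rewrite ?mul0r ?mulr0 ?addr0 ?divff// ?mulr1.
all: move=> /(IH _ _ _ _ _ p'N q'N) cover_z; rewrite /= /quad.
- by left; left; left.
- by left; right.
- by left; left; right.
- by right.
Qed.

Definition digit_sum (d : nat -> nat) (N : nat) : R := \sum_(1 <= k < N) (d k)%:R / 4 ^+ k.

Lemma digit_sumS d N :
  digit_sum d N.+1 = digit_sum d N + (if N == 0%N then 0 else (d N)%:R / 4 ^+ N).
Proof. by case: N => [|N]; rewrite /digit_sum; [rewrite !big_geq ?addr0|rewrite big_nat_recr]. Qed.

Lemma nondecreasing_digit_sum d : nondecreasing_seq (digit_sum d).
Proof.
apply/nondecreasing_seqP => N; rewrite digit_sumS lerDl.
by case: ifP => // _; rewrite divr_ge0// exprn_ge0.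
Qed.

Lemma cantor_corner_digit_sum d N :
  (forall k, (1 <= k <= N)%N -> d k = 0%N \/ d k = 3%N) -> cantor_corner N (digit_sum d N.+1).
Proof.
elim: N d => [|N IH] d d03; first by rewrite /digit_sum big_geq.
exists (d 1%N)%:R, (digit_sum (fun k => d k.+1) N.+1); split.
- by case: (d03 1%N isT) => ->; [left|right].
- by apply: IH => k /andP[k1 kN]; apply: d03.
rewrite /digit_sum big_nat_recl// expr1 mulr_suml; congr (_ + _).
by apply: eq_bigr => i _; rewrite exprSr invfM mulrA.
Qed.

Lemma digit_sum_tail d N k : (forall k, (d k <= 3)%N) ->
  digit_sum d (N.+1 + k) + 4 ^- (N + k) <= digit_sum d N.+1 + 4 ^- N.
Proof.
move=> d3; elim: k => [|k IH]; first by rewrite !addn0.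
apply: le_trans IH; rewrite !addnS digit_sumS addSn /= -addrA lerD2l.
have dk : (d (N + k).+1)%:R <= 3 :> R by rewrite ler_nat.
rewrite [4 ^- (N + k)](_ : _ = 4 * 4 ^- (N + k).+1); last by rewrite exprS invfM mulrA mulfV ?mul1r.
have : 0 < 4 ^- (N + k).+1 :> R by rewrite invr_gt0 exprn_gt0.
by rewrite mulrC; move: dk; nra.
Qed.

Lemma digit_sum_le d N K : (forall k, (d k <= 3)%N) ->
  digit_sum d K <= digit_sum d N.+1 + 4 ^- N.
Proof.
move=> d3; have [KN|NK] := leqP K N.+1.
  by rewrite (le_trans (nondecreasing_digit_sum d _ _ KN))// lerDl invr_ge0 exprn_ge0.
rewrite -(subnKC (ltnW NK)); apply: le_trans (digit_sum_tail d N (K - N.+1) d3).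
by rewrite lerDl invr_ge0 exprn_ge0.
Qed.

Lemma Kset_near_corner {n N} {x : R} : (N <= n)%N -> Kset n x ->
  exists p, [/\ cantor_corner N p, p <= x & x <= p + 4 ^- N].
Proof.
move=> Nn [d [d03 [d3 ->]]].
have cvg_d : cvgn (digit_sum d).
  apply: nondecreasing_is_cvgn; first exact: nondecreasing_digit_sum.
  by exists (digit_sum d 1 + 4 ^- 0) => _ [K _ <-]; exact: digit_sum_le.
rewrite -/(digit_sum d); exists (digit_sum d N.+1); split.
- by apply: cantor_corner_digit_sum => k /andP[k1 kN]; apply: d03; rewrite k1 (leq_trans kN).
- exact: nondecreasing_cvgn_le (nondecreasing_digit_sum d) cvg_d _.
- by apply: limr_le => //; apply: nearW => K; exact: digit_sum_le.
Qed.

End Digits.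

Section Numerics.
Context {R : realType}.

Lemma bernoulli_ineq (x : R) j : 0 <= x -> 1 + j%:R * x <= (1 + x) ^+ j.
Proof.
move=> x0; elim: j => [|j IH]; first by rewrite mul0r addr0.
rewrite exprS (le_trans _ (ler_wpM2l _ IH)) ?addr_ge0// -addn1 natrD.
by have := ler0n R j; nra.
Qed.

Lemma growth_expn_ge {M : R} {j d} : 0 <= M -> (d <= 2 * j + 6)%N ->
  d%:R / (48 * (1 + M)) <= growth M ^+ j.
Proof.
move=> M0 dj; rewrite /growth; set K := 24 * (1 + M).
have K24 : 24 <= K by rewrite /K ler_peMr// lerDl.
have K0 : 0 < K by apply: lt_le_trans K24.
have KV : 0 <= K^-1 by rewrite invr_ge0 ltW.
apply: le_trans (bernoulli_ineq _ j KV).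
have -> : 48 * (1 + M) = 2 * K by rewrite /K; ring.
rewrite ler_pdivrMr; last exact: mulr_gt0.
have -> : (1 + j%:R / K) * (2 * K) = 2 * K + 2 * j%:R by field; rewrite gt_eqF.
have : d%:R <= 2 * j%:R + 6 :> R by rewrite -[2]/(2%:R) -natrM -[6]/(6%:R) -natrD ler_nat.
lra.
Qed.

Lemma expr4V (N : nat) : 4 ^- N = 2 ^- (2 * N) :> R.
Proof. by rewrite exprM (_ : 2 ^+ 2 = 4 :> R)// expr2 -natrM. Qed.

Lemma expr2V_le (k k' : nat) : (k <= k')%N -> 2 ^- k' <= 2 ^- k :> R.
Proof. by move=> kk'; rewrite lef_pV2 ?posrE ?exprn_gt0// ler_eXn2l// ltr1n. Qed.

Lemma expr2V_lt (k k' : nat) : (k < k')%N -> 2 ^- k' < 2 ^- k :> R.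
Proof. by move=> kk'; rewrite ltf_pV2 ?posrE ?exprn_gt0// ltr_eXn2l// ltr1n. Qed.

End Numerics.

Lemma coarse_fine_levels (l m : nat) : (6 < m - l)%N ->
  exists N0 j, [/\ (l < 2 * N0)%N, (2 * (N0 + j).+1 <= m)%N & (m - l <= 2 * j + 6)%N].
Proof. by move=> ml; exists (l %/ 2).+1, (m %/ 2 - 1 - (l %/ 2).+1)%N; split; lia. Qed.

Section HitSet.
Context {R : realType} {n m : nat} {w1 w2 : R * R} {F : R -> R} {M a b : R}.
Hypotheses (hw : orthonormal2 w1 w2) (hF : lipschitz_le F M).
Local Notation hit := (hit_set (Kset n `*` Kset n) (2 ^- m) w1 w2 F a b).

Lemma hit_set_sub_cover N : (N <= n)%N -> (2 * N.+1 <= m)%N ->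
  hit `<=` times_in w1 w2 F a b (cover N 0 0 1).
Proof.
move=> Nn Nm x [xab [y [/andP[my ym] [Kx Ky]]]].
split; first by move: xab; rewrite in_itv.
have [p [pN px xp]] := Kset_near_corner Nn Kx.
have [q [qN qy yq]] := Kset_near_corner Nn Ky.
apply: (cover_cantor_corner N 0 0 1 p q pN qN); rewrite !add0r !mul1r.
have eps : 2 ^- m <= 4 ^- N / 4 :> R.
  by rewrite -invfM -exprSr expr4V expr2V_le.
have [_ _ w21 w22] := orthonormal2_coord_le1 hw.
have y_le : `|y| <= 2 ^- m by rewrite ler_norml my ym.
have /ler_normlP[? ?] : `|y * w2.1| <= 2 ^- m.
  by rewrite normrM (le_trans (ler_piMr (normr_ge0 y) w21)).
have /ler_normlP[? ?] : `|y * w2.2| <= 2 ^- m.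
  by rewrite normrM (le_trans (ler_piMr (normr_ge0 y) w22)).
move: px xp qy yq; rewrite graph_ptE /= => *.
by apply/sq_nbhdP; split; rewrite /= ?mul1r; lra.
Qed.

Lemma lebesgue_hit_set_le {l} : (l < m)%N -> (m <= n)%N -> 2 ^- l <= b - a ->
  (lebesgue_measure hit <= (48 * (1 + M) / (m - l)%:R * (b - a))%:E)%E.
Proof.
move=> lm mn lab; have M0 := lipschitz_le_ge0 hF.
have ab : 0 < b - a by apply: lt_le_trans lab; rewrite invr_gt0 exprn_gt0.
have ml0 : 0 < (m - l)%:R :> R by rewrite ltr0n subn_gt0.
have [ml6|/coarse_fine_levels[N0 [j [lN0 N0jm mlj]]]] := leqP (m - l) 6.
  have hit_ab : hit `<=` `[a, b] by move=> x [].
  apply: le_trans (le_lebesgue_measure hit_ab) _.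
  rewrite lebesgue_measure_itv/= lte_fin -subr_gt0 ab lee_fin ler_peMl ?ltW//.
  by rewrite ltr_pdivlMr// mul1r (le_lt_trans (_ : _ <= 6%:R)) ?ler_nat//; lra.
have Nn : (N0 + j <= n)%N by lia.
apply: le_trans (le_lebesgue_measure (hit_set_sub_cover _ Nn N0jm)) _.
rewrite lebesgue_times_in lee_fin.
have N0ab : 1 / 4 ^+ N0 < b - a.
  by rewrite mul1r expr4V (lt_le_trans (expr2V_lt _ _ lN0)).
have decay := time_in_cover_decay hw hF N0 j 0 0 1 ltr01 N0ab.
have len : time_in w1 w2 F a b (cover 0 0 0 1) <= b - a.
  by apply: time_in_le_length; rewrite -subr_ge0 ltW.
have grow := growth_expn_ge M0 mlj.
set T := time_in _ _ _ _ _ _ in decay *; set c := (m - l)%:R / (48 * (1 + M)) in grow.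
have c0 : 0 < c by rewrite divr_gt0// mulr_gt0// ltr_wpDr.
rewrite -invf_div -/c mulrC ler_pdivlMr//.
by rewrite (le_trans _ (le_trans decay len))// ler_wpM2l// time_in_ge0.
Qed.

End HitSet.

Theorem propositionA1 (R : realType) :
  exists C : R, 0 < C /\
    forall (n m l : nat), (l < m)%N -> (m <= n)%N ->
    forall M : R, 0 < M ->
      (rect_const (@Kset R n `*` @Kset R n) (2 ^- m) (2 ^- l) M
        <= (C * (1 + M) / (m - l)%:R)%:E)%E.
Proof.
exists 48; split => // n m l lm mn M M0.
apply: ge_ereal_sup => _ [w1 [w2 [F [a [b [hw [hF [lab ->]]]]]]]].
have ab : 0 < b - a by apply: lt_le_trans lab; rewrite invr_gt0 exprn_gt0.
apply: le_trans (lee_wpmul2r _ (lebesgue_hit_set_le hw hF lm mn lab)) _.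
  by rewrite lee_fin invr_ge0 ltW.
by rewrite -EFinM mulfK// gt_eqF.
Qed.
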